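(* With size notion $s(x)=|x|$ (word length) on $\Sigma^*$, each of the word distances $\mathrm{ed}$, $\mathrm{ned}$, $\mathrm{ged}$, $\mathrm{ced}$ and $\mathrm{prf}$ has the asymptotic separation property: for each such $d$, every sequence $(x_k)$ of words with $\limsup_k|x_k|=\infty$ and every sequence $(y_k)$ of words with $\limsup_k |y_k|<\infty$ satisfy $\lim_{k\to\infty}d(x_k,y_k)=\sup d$, where $\sup d$ is the supremum of the image of $d$.
   Context: $\Sigma$ is a finite alphabet. Edit operations are pairs $(a,b)\in(\Sigma\cup\{\varepsilon\})^2\setminus\{(\varepsilon,\varepsilon)\}$; an edit path from $x$ to $y$ is a sequence $p=(a_1,b_1)\cdots(a_n,b_n)$ of edit operations with $a_1\cdots a_n=x$ and $b_1\cdots b_n=y$; $|p|=n$ and (uniform weights) $\mathrm{wgt}(p)=|\{i: a_i\neq b_i\}|$. $\mathrm{ed}(x,y)=\min_p \mathrm{wgt}(p)$ (Levenshtein distance); $\mathrm{ned}(x,y)=\min_p \mathrm{wgt}(p)/|p|$ over edit paths $p$ from $x$ to $y$ ($\mathrm{ned}(\varepsilon,\varepsilon)=0$); $\mathrm{ged}(x,y)=\frac{2\,\mathrm{ed}(x,y)}{|x|+|y|+\mathrm{ed}(x,y)}$ ($0$ if $x=y=\varepsilon$). For words $u,u'$ with $\mathrm{ed}(u,u')=1$ put $\mathrm{ced}(u,u')=1/\max(|u|,|u'|)$; for a sequence $\rho=(u_0,\dots,u_k)$ with $\mathrm{ed}(u_{i},u_{i+1})=1$ put $\mathrm{ced}(\rho)=\sum_{i=1}^k\mathrm{ced}(u_{i-1},u_i)$,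 and $\mathrm{ced}(x,y)=\min\{\mathrm{ced}(\rho): \rho=(u_0,\dots,u_k),u_0=x,u_k=y\}$. $\mathrm{prf}(x,y)=|x|+|y|-2\max\{|z|: x,y\in z\Sigma^*\}$. *)

From mathcomp Require Import all_boot all_order all_algebra.
From mathcomp Require Import all_classical all_reals all_analysis.
Set Implicit Arguments. Unset Strict Implicit. Unset Printing Implicit Defensive.
Import Order.TTheory GRing.Theory Num.Theory.
Local Open Scope classical_set_scope.
Local Open Scope ring_scope.

Section WordDistances.
Variables (R : realType) (Sigma : finType).

Definition word := seq Sigma.

(* edit operations (a,b) in (Sigma ∪ {eps})^2 \ {(eps,eps)}; eps is None *)
Definition edit_op := (option Sigma * option Sigma)%type.
Definition is_edit_op (o : edit_op) : bool := (o.1 != None) || (o.2 != None).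

Definition opt_word (a : option Sigma) : word :=
  if a is Some c then [:: c] else [::].

Definition edit_path (x y : word) (p : seq edit_op) : Prop :=
  all is_edit_op p /\
  flatten (map (fun o => opt_word o.1) p) = x /\
  flatten (map (fun o => opt_word o.2) p) = y.

Definition wgt (p : seq edit_op) : nat := count (fun o : edit_op => o.1 != o.2) p.

Definition ed (x y : word) : R :=
  inf [set (wgt p)%:R | p in [set p | edit_path x y p]].

Definition ned (x y : word) : R :=
  if (x == [::]) && (y == [::]) then 0
  else inf [set (wgt p)%:R / (size p)%:R | p in [set p | edit_path x y p]].

Definition ged (x y : word) : R :=
  if (x == [::]) && (y == [::]) then 0
  else 2 * ed x y / ((size x)%:R + (size y)%:R + ed x y).

(* cost of a chain u0 = u, u1, ..., uk (given as u and the list s = u1..uk) *)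
Fixpoint ced_cost (u : word) (s : seq word) : R :=
  if s is v :: s' then ((maxn (size u) (size v))%:R)^-1 + ced_cost v s' else 0.

Definition ed1_rel : rel word := fun u v => ed u v == 1.

Definition ced (x y : word) : R :=
  inf [set ced_cost x s | s in [set s | path ed1_rel x s /\ last x s = y]].

Definition lcp (x y : word) : nat :=
  \max_(i < (size x).+1 | prefix (take i x) y) (size (take i x)).

Definition prf (x y : word) : R := ((size x + size y - 2 * lcp x y)%N)%:R.

Definition sup_dist (d : word -> word -> R) : \bar R :=
  ereal_sup (range (fun p : word * word => (d p.1 p.2)%:E)).

Definition asymp_sep (d : word -> word -> R) : Prop :=
  forall x y : nat -> word,
    (forall M : nat, \forall k \near \oo, (M <= size (x k))%N) ->
    (exists M : nat, \forall k \near \oo, (size (y k) <= M)%N) ->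
    (fun k => (d (x k) (y k))%:E) @ \oo --> sup_dist d.

End WordDistances.

From mathcomp Require Import all_boot all_order all_algebra.
From mathcomp Require Import all_classical all_reals all_analysis.
From mathcomp Require Import ring lra zify.
Set Implicit Arguments. Unset Strict Implicit. Unset Printing Implicit Defensive.
Import Order.TTheory GRing.Theory Num.Theory.
Local Open Scope classical_set_scope.
Local Open Scope ring_scope.

(* Two mechanisms cover the five distances.  ed, prf and ced satisfy
   d(x, y) >= F |x| - F |y| for a nondecreasing F tending to infinity: F n = n
   for ed and prf, and the harmonic numbers H for ced, because a unit edit
   u -> v changes the length by at most one and so costs
   1/max(|u|,|v|) >= H |u| - H |v|.  Hence d(x_k, y_k) -> +oo = sup d.
   ned and ged are at most 1 and at least 1 - |y|/|x|, and |y_k|/|x_k| -> 0,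
   so d(x_k, y_k) -> 1 = sup d. *)

Lemma sub_count_predU (T : Type) (a a1 a2 : pred T) (s : seq T) :
  subpred a (predU a1 a2) -> (count a s <= count a1 s + count a2 s)%N.
Proof. by move=> sub; rewrite -count_predUI (leq_trans (sub_count sub s)) ?leq_addr. Qed.

Section EditPaths.
Variable Sigma : finType.
Implicit Types (x y u : word Sigma) (p : seq (edit_op Sigma)).

Definition edit_src p : word Sigma := flatten [seq opt_word o.1 | o <- p].
Definition edit_tgt p : word Sigma := flatten [seq opt_word o.2 | o <- p].

Lemma size_edit_src p : size (edit_src p) = count (fun o => o.1 != None) p.
Proof. by rewrite /edit_src; elim: p => //= [[[a|] b]] p IH; rewrite size_cat IH. Qed.

Lemma size_edit_tgt p : size (edit_tgt p) = count (fun o => o.2 != None) p.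
Proof. by rewrite /edit_tgt; elim: p => //= [[a [b|]]] p IH; rewrite size_cat IH. Qed.

Lemma edit_path_src_le x y p : edit_path x y p -> (size x <= wgt p + size y)%N.
Proof.
case=> _ [<- <-]; rewrite -/(edit_src p) -/(edit_tgt p) size_edit_src size_edit_tgt.
by apply: sub_count_predU => -[[a|] [b|]] //=; case: eqP.
Qed.

Lemma edit_path_tgt_le x y p : edit_path x y p -> (size y <= wgt p + size x)%N.
Proof.
case=> _ [<- <-]; rewrite -/(edit_src p) -/(edit_tgt p) size_edit_src size_edit_tgt.
by apply: sub_count_predU => -[[a|] [b|]] //=; case: eqP.
Qed.

Lemma edit_path_size_le x y p : edit_path x y p -> (size p <= wgt p + size y)%N.
Proof.
case=> + [_ <-]; rewrite -/(edit_tgt p) size_edit_tgt all_count => /eqP <-.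
by apply: sub_count_predU => -[[a|] [b|]] //=; case: eqP.
Qed.

Lemma edit_path_size_ge x y p : edit_path x y p -> (size x <= size p)%N.
Proof. by case=> _ [<- _]; rewrite -/(edit_src p) size_edit_src count_size. Qed.

Definition del_ins_path x y : seq (edit_op Sigma) :=
  [seq (Some a, None) | a <- x] ++ [seq (None, Some b) | b <- y].

Lemma edit_path_del_ins x y : edit_path x y (del_ins_path x y).
Proof.
split; first by rewrite all_cat !all_map; apply/andP; split; apply/allP.
rewrite !map_cat !flatten_cat; split.
  by elim: x => [|a x /= ->] //=; elim: y.
by elim: x => [|a x //]; elim: y => [|b y /= ->].
Qed.

Lemma wgt_del_ins x y : wgt (del_ins_path x y) = (size x + size y)%N.
Proof.
by rewrite /wgt count_cat !count_map !(eq_count (a2 := predT)) // !count_predT.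
Qed.

Lemma size_del_ins x y : size (del_ins_path x y) = (size x + size y)%N.
Proof. by rewrite size_cat !size_map. Qed.

Definition copy_path u : seq (edit_op Sigma) := [seq (Some a, Some a) | a <- u].

Lemma edit_path_copy u : edit_path u u (copy_path u).
Proof. by split; [rewrite all_map; apply/allP | split; elim: u => //= a u ->]. Qed.

Lemma wgt_copy u : wgt (copy_path u) = 0%N.
Proof. by elim: u => //= a u; rewrite /wgt /= eqxx. Qed.

End EditPaths.

Section DistanceBounds.
Variables (R : realType) (Sigma : finType).
Implicit Types (x y u : word Sigma) (p : seq (edit_op Sigma)).

Lemma inf_edit_paths_ge (f : seq (edit_op Sigma) -> R) x y r :
  (forall p, edit_path x y p -> r <= f p) ->
  r <= inf [set f p | p in [set p | edit_path x y p]].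
Proof.
move=> f_ge; apply: lb_le_inf => [|_ [p /f_ge + <-]] //.
by exists (f (del_ins_path x y)), (del_ins_path x y) => //; exact: edit_path_del_ins.
Qed.

Lemma inf_edit_paths_le (f : seq (edit_op Sigma) -> R) x y p :
  (forall q, 0 <= f q) -> edit_path x y p ->
  inf [set f p | p in [set p | edit_path x y p]] <= f p.
Proof. by move=> f_ge0 xyp; apply: ge_inf; [exists 0 => _ [q _ <-] | exists p]. Qed.

Lemma ed_ge0 x y : 0 <= ed R x y.
Proof. exact: inf_edit_paths_ge. Qed.

Lemma ed_le_wgt x y p : edit_path x y p -> ed R x y <= (wgt p)%:R.
Proof. exact: inf_edit_paths_le. Qed.

Lemma ed_le_sizeD x y : ed R x y <= (size x + size y)%:R.
Proof. by rewrite -wgt_del_ins; apply/ed_le_wgt/edit_path_del_ins. Qed.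

Lemma dist_size_le_ed x y : `|(size x)%:R - (size y)%:R| <= ed R x y.
Proof.
apply/ler_normlP; split; rewrite ?opprB; apply: inf_edit_paths_ge => p xyp;
  rewrite lerBlDr -natrD ler_nat.
- exact: edit_path_tgt_le xyp.
- exact: edit_path_src_le xyp.
Qed.

Lemma ed_cons_l a u : ed R (a :: u) u = 1.
Proof.
apply/eqP; rewrite eq_le; apply/andP; split.
  have /ed_le_wgt : edit_path (a :: u) u ((Some a, None) :: copy_path u).
    have [copy_ops [copy_src copy_tgt]] := edit_path_copy u.
    by split; rewrite /= ?copy_ops ?copy_src ?copy_tgt.
  by rewrite /wgt /= -/(wgt _) wgt_copy.
by have /ler_normlP[_] := dist_size_le_ed (a :: u) u; rewrite /= -natr1 addrAC subrr add0r.
Qed.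

Lemma ed_cons_r a u : ed R u (a :: u) = 1.
Proof.
apply/eqP; rewrite eq_le; apply/andP; split.
  have /ed_le_wgt : edit_path u (a :: u) ((None, Some a) :: copy_path u).
    have [copy_ops [copy_src copy_tgt]] := edit_path_copy u.
    by split; rewrite /= ?copy_ops ?copy_src ?copy_tgt.
  by rewrite /wgt /= -/(wgt _) wgt_copy.
by have /ler_normlP[] := dist_size_le_ed u (a :: u); rewrite opprB /= -natr1 addrAC subrr add0r.
Qed.

Lemma ned_le1 x y : ned R x y <= 1.
Proof.
rewrite /ned; case: ifPn => // xy_nnil.
have sizeD_gt0 : (0 < size x + size y)%N by case: x xy_nnil => //; case: y.
have ratio_ge0 (q : seq (edit_op Sigma)) : 0 <= (wgt q)%:R / (size q)%:R :> R by rewrite divr_ge0.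
apply: le_trans (inf_edit_paths_le ratio_ge0 (edit_path_del_ins x y)) _.
by rewrite wgt_del_ins size_del_ins divff // pnatr_eq0 -lt0n.
Qed.

Lemma ned_ge_ratio x y : (0 < size x)%N ->
  1 - (size y)%:R / (size x)%:R <= ned R x y.
Proof.
move=> x_gt0; rewrite /ned ifF; last by case: x x_gt0.
apply: inf_edit_paths_ge => p xyp.
have x_le_p := edit_path_size_ge xyp.
have p_gt0 : (0 < size p)%N := leq_trans x_gt0 x_le_p.
apply: (@le_trans _ _ (1 - (size y)%:R / (size p)%:R)).
  by rewrite lerD2l lerN2 ler_wpM2l // lef_pV2 ?posrE ?ltr0n // ler_nat.
rewrite lerBlDr -mulrDl ler_pdivlMr ?ltr0n // mul1r -natrD ler_nat.
exact: edit_path_size_le xyp.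
Qed.

Lemma ged_le1 x y : ged R x y <= 1.
Proof.
rewrite /ged; case: ifPn => // xy_nnil.
have sizeD_gt0 : (0 < size x + size y)%N by case: x xy_nnil => //; case: y.
have e_ge0 := ed_ge0 x y; have := ed_le_sizeD x y; rewrite natrD => e_le.
rewrite ler_pdivrMr ?mul1r; first lra.
by rewrite -natrD ltr_pwDl // ltr0n.
Qed.

Lemma ged_ge_ratio x y : (0 < size x)%N ->
  1 - (size y)%:R / (size x)%:R <= ged R x y.
Proof.
move=> x_gt0; rewrite /ged ifF; last by case: x x_gt0.
have := le_trans (ler_norm _) (dist_size_le_ed x y); have := ed_ge0 x y.
have : (0 : R) < (size x)%:R by rewrite ltr0n.
have : (0 : R) <= (size y)%:R by [].
move: (ed R x y) (size x)%:R (size y)%:R => e a b b_ge0 a_gt0 e_ge0 sub_le_e.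
have -> : 1 - b / a = (a - b) / a by rewrite mulrBl divff ?gt_eqF // mul1r.
rewrite ler_pdivlMr; last lra.
rewrite mulrAC ler_pdivrMr // -subr_ge0.
have -> : 2 * e * a - (a - b) * (a + b + e) = (a + b) * (e - (a - b)) by ring.
by rewrite mulr_ge0 ?subr_ge0 //; lra.
Qed.

Lemma lcp_le_size x y : (lcp x y <= size y)%N.
Proof. by apply/bigmax_leqP => i /size_prefix. Qed.

Lemma prf_ge_sizeB x y : (size x)%:R - (size y)%:R <= prf R x y.
Proof.
rewrite lerBlDr -natrD ler_nat; have := lcp_le_size x y.
by rewrite /prf; lia.
Qed.

End DistanceBounds.

Section ContextualEditDistance.
Variables (R : realType) (Sigma : finType).
Implicit Types (x y u v : word Sigma) (s : seq (word Sigma)).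
Local Notation ed1 := (@ed1_rel R Sigma).

Definition harmonic_number (n : nat) : R := series harmonic n.

Lemma nondecreasing_harmonic_number : nondecreasing_seq harmonic_number.
Proof.
move=> m n; apply: (@nondecreasing_series R harmonic xpredT 0) => k _ _.
exact: harmonic_ge0.
Qed.

Lemma harmonic_number_cvgy : harmonic_number @ \oo --> +oo.
Proof. exact: nondecreasing_dvgn_lt nondecreasing_harmonic_number (@dvg_harmonic R). Qed.

Lemma harmonic_number_sub_le m n : (m <= n.+1)%N -> (n <= m.+1)%N ->
  harmonic_number m - harmonic_number n <= (maxn m n)%:R^-1.
Proof.
case: (ltngtP m n) => [lt_mn _ le_nm | lt_nm le_mn _ | ->]; last by rewrite subrr.
- have -> : n = m.+1 by apply/eqP; rewrite eqn_leq le_nm.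
  rewrite -opprB /harmonic_number seriesSB.
  by apply: (@le_trans _ _ 0); rewrite ?oppr_le0 invr_ge0.
- have -> : m = n.+1 by apply/eqP; rewrite eqn_leq le_mn.
  by rewrite /harmonic_number seriesSB.
Qed.

Lemma ed1_size u v : ed1 u v ->
  (size u <= (size v).+1)%N /\ (size v <= (size u).+1)%N.
Proof.
move=> /eqP uv1; have /ler_normlP[] := dist_size_le_ed R u v; rewrite uv1.
by rewrite opprB !lerBlDl !natr1 !ler_nat.
Qed.

Lemma ced_cost_ge u s : path ed1 u s ->
  harmonic_number (size u) - harmonic_number (size (last u s)) <= ced_cost R u s.
Proof.
elim: s u => [|v s IH] u /=; first by rewrite subrr.
move=> /andP[/ed1_size[le_uv le_vu] /IH le_cost].
rewrite -(subrKA (harmonic_number (size v))) lerD //.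
exact: harmonic_number_sub_le.
Qed.

Lemma ed1_path_to_nil x : exists s, path ed1 x s /\ last x s = [::].
Proof.
elim: x => [|a x [s [xs_path xs_last]]]; first by exists [::].
by exists (x :: s); rewrite /= xs_path xs_last /ed1_rel ed_cons_l eqxx.
Qed.

Lemma ed1_path_from_nil y : exists s, path ed1 [::] s /\ last [::] s = y.
Proof.
elim: y => [|b y [s [s_path s_last]]]; first by exists [::].
exists (rcons s (b :: y)).
by rewrite rcons_path last_rcons s_path s_last /ed1_rel ed_cons_r eqxx.
Qed.

Lemma ced_ge_harmonic x y : harmonic_number (size x) - harmonic_number (size y) <= ced R x y.
Proof.
apply: lb_le_inf => [|_ [s [xs_path <-] <-]]; last exact: ced_cost_ge.
have [s1 [s1_path s1_last]] := ed1_path_to_nil x.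
have [s2 [s2_path s2_last]] := ed1_path_from_nil y.
exists (ced_cost R x (s1 ++ s2)), (s1 ++ s2) => //.
by rewrite /= cat_path last_cat s1_last s1_path s2_path s2_last.
Qed.

End ContextualEditDistance.

Section AsymptoticSeparation.
Variables (R : realType) (Sigma : finType).
Implicit Types (d : word Sigma -> word Sigma -> R) (x y : nat -> word Sigma).

Lemma sup_dist_ge d u v : ((d u v)%:E <= sup_dist d)%E.
Proof. by apply: ereal_sup_ubound; exists (u, v). Qed.

Lemma asymp_sep_unbounded d (F : nat -> R) :
  nondecreasing_seq F -> F @ \oo --> +oo ->
  (forall u v, F (size u) - F (size v) <= d u v) -> asymp_sep d.
Proof.
move=> F_nd F_cvgy d_ge x y /cvgnyPge x_cvgy [M y_le].
have /cvgryPge Fx_ge : F \o (size \o x) @ \oo --> +oo := cvg_comp _ _ x_cvgy F_cvgy.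
have d_cvgy : (fun k => (d (x k) (y k))%:E) @ \oo --> +oo%E.
  apply/cvgeyPge => A; near=> k; rewrite lee_fin.
  have : A + F M <= F (size (x k)) by near: k; exact: Fx_ge.
  have : F (size (y k)) <= F M by apply: F_nd; near: k.
  by have := d_ge (x k) (y k); lra.
suff -> : sup_dist d = +oo%E by [].
apply/eqyP => A _; have [k] := filter_ex ((cvgeyPge _).1 d_cvgy A).
by move/le_trans; apply; exact: sup_dist_ge.
Unshelve. all: by end_near. Qed.

Lemma size_ratio_cvg0 x y : size \o x @ \oo --> \oo ->
  (exists M, \forall k \near \oo, (size (y k) <= M)%N) ->
  (fun k => (size (y k))%:R / (size (x k))%:R : R) @ \oo --> 0.
Proof.
move=> x_cvgy [M y_le].
have x_gt0 : \forall k \near \oo, 0 < (size (x k))%:R :> R.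
  by move/cvgnyPge: x_cvgy => /(_ 1%N); apply: filterS => k; rewrite ltr0n.
have /gtr0_cvgV0 xV_cvg0 : (fun k => (size (x k))%:R : R) @ \oo --> +oo.
  exact: cvg_comp _ _ x_cvgy cvgr_idn.
apply: (@squeeze_cvgr _ _ _ _ (fun=> 0) (fun k => M%:R / (size (x k))%:R)).
- apply: filterS y_le => k yk_le.
  by rewrite divr_ge0 //=; apply: ler_wpM2r; rewrite ?invr_ge0 // ler_nat.
- exact: (@cvg_cst R^o).
- by rewrite -(mulr0 M%:R); apply: cvgM; [exact: (@cvg_cst R^o) | exact: xV_cvg0].
Qed.

Lemma asymp_sep_bounded d : (forall u v, d u v <= 1) ->
  (forall u v, (0 < size u)%N -> 1 - (size v)%:R / (size u)%:R <= d u v) ->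
  asymp_sep d.
Proof.
move=> d_le1 d_ge x y x_cvgy y_bnd.
have ratio_cvg0 := size_ratio_cvg0 ((cvgnyPge _).2 x_cvgy) y_bnd.
have x_gt0 : \forall k \near \oo, (0 < size (x k))%N by exact: x_cvgy 1%N.
have -> : sup_dist d = 1%:E.
  apply/eqP; rewrite eq_le; apply/andP; split.
    by apply: ge_ereal_sup => _ [[u v] _ <-]; rewrite lee_fin.
  have [k xk_gt0] := filter_ex x_gt0.
  apply: le_trans (sup_dist_ge d (x k) [::]); rewrite lee_fin.
  by have := d_ge (x k) [::] xk_gt0; rewrite mul0r subr0.
apply: cvg_EFin; first exact: nearW.
apply: (@squeeze_cvgr _ _ _ _ (fun k => 1 - (size (y k))%:R / (size (x k))%:R) (fun=> 1)).
- by near=> k; rewrite d_le1 d_ge //; near: k.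
- rewrite -[X in _ --> X]subr0; apply: cvgB; [exact: (@cvg_cst R^o) | exact: ratio_cvg0].
- exact: (@cvg_cst R^o).
Unshelve. all: by end_near. Qed.

End AsymptoticSeparation.

Theorem mainTheorem5 (R : realType) (Sigma : finType) :
  asymp_sep (@ed R Sigma) /\ asymp_sep (@ned R Sigma) /\ asymp_sep (@ged R Sigma) /\
  asymp_sep (@ced R Sigma) /\ asymp_sep (@prf R Sigma).
Proof.
have natr_nd : nondecreasing_seq (fun n => n%:R : R) by move=> m n; rewrite ler_nat.
split; [|split; [|split; [|split]]].
- apply: asymp_sep_unbounded natr_nd cvgr_idn _ => u v.
  exact: le_trans (ler_norm _) (dist_size_le_ed R u v).
- exact: asymp_sep_bounded (@ned_le1 R Sigma) (@ned_ge_ratio R Sigma).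
- exact: asymp_sep_bounded (@ged_le1 R Sigma) (@ged_ge_ratio R Sigma).
- exact: asymp_sep_unbounded (@nondecreasing_harmonic_number R)
    (@harmonic_number_cvgy R) (@ced_ge_harmonic R Sigma).
- exact: asymp_sep_unbounded natr_nd cvgr_idn (@prf_ge_sizeB R Sigma).
Qed.
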